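(* Let $\mathcal V$ be a finite alphabet, $\mathcal V^*$ the set of finite strings over $\mathcal V$, $e$ an environment, $p$ a probability distribution on test suites $t\in\mathcal V^*$, and $c_1,c_2\in\mathcal V^*$ fixed implementations. Let $$\mathrm{sim}_{p,e}(c_1,c_2):=\mathbb E_{t\sim p}\Big[\tfrac{1}{|t|}\sum_{k=1}^{|t|}\mathbf 1\{O_k(c_1,t\mid e)=O_k(c_2,t\mid e)\}\Big]$$ and suppose $\mathrm{sim}_{p,e}(c_1,c_2)=\mu\in(0,1)$. For $m\ge1$, draw $t_1,\dots,t_m\sim p$ i.i.d. and define the smooth estimator $$\widehat{\mathrm{sim}}_{p,e;m}(c_1,c_2):=\frac1m\sum_{j=1}^m\frac{1}{|t_j|}\sum_{k=1}^{|t_j|}\mathbf 1\{O_k(c_1,t_j\mid e)=O_k(c_2,t_j\mid e)\}$$ and the sharp estimator $\widehat{\mathrm{sim}}^\infty_{p,e;m}(c_1,c_2):=\lim_{s\to\infty}\big(\widehat{\mathrm{sim}}_{p,e;m}(c_1,c_2)\big)^s=\mathbf 1\{\widehat{\mathrm{sim}}_{p,e;m}(c_1,c_2)=1\}$. For an estimator $\widehat X$ let $\mathrm{SNR}(\widehat X):=(\mathbb E[\widehat X])^2/\mathrm{Var}(\widehat X)$. Then for every $m\ge1$, $$\frac{\mathrm{SNR}(\widehat{\mathrm{sim}}_{p,e;m})}{\mathrm{SNR}(\widehat{\mathrm{sim}}^\infty_{p,e;m})}\ \ge\ m\Big(\frac1\mu\Big)^{m-1}\cdot\frac{1-\mu^m}{1-\mu}\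 \ge\ m^2.$$
   Context: A test suite $t\in\mathcal V^*$ consists of $|t|\ge1$ test cases. For an environment $e$, an implementation $c$ and a test suite $t$, the test harness returns a deterministic output vector $O(c,t\mid e)=(O_1(c,t\mid e),\dots,O_{|t|}(c,t\mid e))\in\mathbb O^{|t|}$ for a set $\mathbb O$ of possible test outputs. *)

From HB Require Import structures.
From mathcomp Require Import all_boot all_order all_algebra.
From mathcomp Require Import mathcomp_extra boolp classical_sets reals ereal esum.
Set Implicit Arguments. Unset Strict Implicit. Unset Printing Implicit Defensive.
Import Order.TTheory GRing.Theory Num.Theory.
Local Open Scope classical_set_scope.
Local Open Scope ring_scope.

Section Defs.
Variables (R : realType) (V : finType) (Obs : eqType) (Env : Type).
(* Test harness: O e c t k is the k-th output (0-based, k < size t) of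
   implementation c on test suite t in environment e. *)
Variable O : Env -> seq V -> seq V -> nat -> Obs.
Variables (e : Env) (c1 c2 : seq V).

Definition agree_frac (t : seq V) : R :=
  (size t)%:R^-1 * \sum_(k < size t) (O e c1 t k == O e c2 t k)%:R.

Definition is_pmf (p : seq V -> R) : Prop :=
  (forall t, 0 <= p t) /\ (\esum_(t in [set: seq V]) (p t)%:E = 1%E).

Definition sim (p : seq V -> R) : R :=
  fine (\esum_(t in [set: seq V]) (p t * agree_frac t)%:E).

Definition Eiid (p : seq V -> R) (m : nat) (F : m.-tuple (seq V) -> R) : R :=
  fine (\esum_(ts in [set: m.-tuple (seq V)])
          ((\prod_(j < m) p (tnth ts j)) * F ts)%:E).

Definition Variid (p : seq V -> R) (m : nat) (F : m.-tuple (seq V) -> R) : R :=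
  Eiid p (fun ts => (F ts - Eiid p F) ^+ 2).

Definition SNR (p : seq V -> R) (m : nat) (F : m.-tuple (seq V) -> R) : R :=
  (Eiid p F) ^+ 2 / Variid p F.

Definition smooth_est (m : nat) (ts : m.-tuple (seq V)) : R :=
  m%:R^-1 * \sum_(j < m) agree_frac (tnth ts j).

(* sharp estimator: lim_{s->oo} (smooth)^s = 1{smooth = 1} *)
Definition sharp_est (m : nat) (ts : m.-tuple (seq V)) : R :=
  if smooth_est ts == 1 then 1 else 0.

End Defs.

From HB Require Import structures.
From mathcomp Require Import all_boot all_order all_algebra.
From mathcomp Require Import mathcomp_extra boolp classical_sets functions.
From mathcomp Require Import reals ereal esum fsbigop.
From mathcomp Require Import ring lra.
Import Order.TTheory GRing.Theory Num.Theory.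
Local Open Scope classical_set_scope.
Local Open Scope ring_scope.

(* Let X be the agreement fraction of one test suite, mu = E X and q = P(X = 1) <= mu.
   The smooth estimator is the mean of m i.i.d. copies of X, so its variance is
   Var X / m <= mu (1 - mu) / m and its SNR is at least m mu / (1 - mu).  The sharp
   estimator is the product of the m indicators 1{X_j = 1}, a Bernoulli variable of
   parameter Q = q^m <= mu^m, whose SNR is Q / (1 - Q) <= mu^m / (1 - mu^m).  Dividing
   gives the first bound; the second holds because (1 - mu^m) / (1 - mu) is a sum of
   m powers of mu, each at least mu^(m-1). *)

Lemma esumZl (R : realType) (T : choiceType) (c : R) (a : T -> \bar R) :
  0 <= c -> (forall t, 0 <= a t)%E ->
  \esum_(t in [set: T]) (c%:E * a t)%E = (c%:E * \esum_(t in [set: T]) a t)%E.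
Proof.
move=> c0 a0; rewrite -ereal_supZl //; last first.
  by apply/set0P; exists 0%E, set0; rewrite ?fsbig_set0 //; apply: fsets_set0.
rewrite image_comp; congr ereal_sup; apply: eq_imagel => A _ /=.
by rewrite ge0_mule_fsumr.
Qed.

Section PmfExpectation.
Set Implicit Arguments.
Unset Strict Implicit.
Variables (R : realType) (T : choiceType) (w : T -> R).
Hypotheses (w_ge0 : forall t, 0 <= w t)
           (w_sum1 : \esum_(t in [set: T]) (w t)%:E = 1%E).

(* The extended sum may be +oo, where fine returns the junk value 0, so the lemmas
   below are stated for nonnegative bounded F; the bound B only ensures finiteness. *)
Definition expect (F : T -> R) : R := fine (\esum_(t in [set: T]) (w t * F t)%:E).

Definition variance (F : T -> R) : R := expect (fun t => (F t - expect F) ^+ 2).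

Lemma esum_expect (F : T -> R) B : (forall t, 0 <= F t <= B) ->
  \esum_(t in [set: T]) (w t * F t)%:E = (expect F)%:E.
Proof.
move=> FB; have F0 t : 0 <= F t by case/andP: (FB t).
have le_B : (\esum_(t in [set: T]) (w t * F t)%:E <= `|B|%:E)%E.
  rewrite -[leRHS]mule1 -w_sum1 -esumZl => [||t]; rewrite ?lee_fin //.
  apply: le_esum => t _; rewrite -EFinM lee_fin mulrC ler_wpM2r //.
  by case/andP: (FB t) => _ /le_trans; apply; apply: ler_norm.
rewrite /expect fineK // ge0_fin_numE ?(le_lt_trans le_B) ?ltry //.
by apply: esum_ge0 => t _; rewrite lee_fin mulr_ge0.
Qed.

Lemma expect_ge0 (F : T -> R) : (forall t, 0 <= F t) -> 0 <= expect F.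
Proof.
by move=> F0; apply/fine_ge0/esum_ge0 => t _; rewrite lee_fin mulr_ge0.
Qed.

Lemma expect_cst c : 0 <= c -> expect (fun=> c) = c.
Proof.
move=> c0; rewrite /expect.
under eq_esum do rewrite mulrC EFinM.
by rewrite esumZl // ?w_sum1 ?mule1 // => t; rewrite lee_fin.
Qed.

Lemma ler_expect (F G : T -> R) B C :
  (forall t, 0 <= F t <= B) -> (forall t, 0 <= G t <= C) ->
  (forall t, F t <= G t) -> expect F <= expect G.
Proof.
move=> FB GC FG; rewrite -lee_fin -(esum_expect FB) -(esum_expect GC).
by apply: le_esum => t _; rewrite lee_fin ler_wpM2l.
Qed.

Lemma expect_sum n (F : 'I_n -> T -> R) B : (forall i t, 0 <= F i t <= B) ->
  expect (fun t => \sum_(i < n) F i t) = \sum_(i < n) expect (F i).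
Proof.
move=> FB; have F0 i t : 0 <= F i t by case/andP: (FB i t).
have sumB t : 0 <= \sum_(i < n) F i t <= \sum_(i < n) B.
  by rewrite sumr_ge0 //= ler_sum // => i _; case/andP: (FB i t).
apply: EFin_inj; rewrite -(esum_expect sumB) -sumEFin.
under eq_esum do rewrite mulr_sumr -sumEFin.
rewrite esum_sum => [|t i _ _]; last by rewrite lee_fin mulr_ge0.
by apply: eq_bigr => i _; rewrite (esum_expect (FB i)).
Qed.

Lemma expectD (F G : T -> R) B C :
  (forall t, 0 <= F t <= B) -> (forall t, 0 <= G t <= C) ->
  expect (fun t => F t + G t) = expect F + expect G.
Proof.
move=> FB GC; have F0 t : 0 <= F t by case/andP: (FB t).
have G0 t : 0 <= G t by case/andP: (GC t).
have FGB t : 0 <= F t + G t <= B + C.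
  by case/andP: (FB t) => ? ?; case/andP: (GC t) => ? ?; rewrite addr_ge0 ?lerD.
apply: EFin_inj; rewrite EFinD -(esum_expect FGB) -(esum_expect FB) -(esum_expect GC).
rewrite -esumD => [|t _|t _]; rewrite ?lee_fin ?mulr_ge0 //.
by apply: eq_esum => t _; rewrite mulrDr EFinD.
Qed.

Lemma expectZ c (F : T -> R) B : 0 <= c -> (forall t, 0 <= F t <= B) ->
  expect (fun t => c * F t) = c * expect F.
Proof.
move=> c0 FB; have F0 t : 0 <= F t by case/andP: (FB t).
have cFB t : 0 <= c * F t <= c * B.
  by case/andP: (FB t) => ? ?; rewrite mulr_ge0 ?ler_wpM2l.
apply: EFin_inj; rewrite EFinM -(esum_expect cFB) -(esum_expect FB).
rewrite -esumZl => [|//|t]; last by rewrite lee_fin mulr_ge0.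
by apply: eq_esum => t _; rewrite -EFinM mulrCA.
Qed.

Lemma varianceE (F : T -> R) B : (forall t, 0 <= F t <= B) ->
  variance F = expect (fun t => F t ^+ 2) - expect F ^+ 2.
Proof.
move=> FB; rewrite /variance; set a := expect F.
have a0 : 0 <= a by apply: expect_ge0 => t; case/andP: (FB t).
have dev_B t : 0 <= (F t - a) ^+ 2 <= (B + a) ^+ 2.
  by case/andP: (FB t) => ? ?; rewrite sqr_ge0 /=; nra.
have lin_B t : 0 <= 2 * a * F t <= 2 * a * B.
  by case/andP: (FB t) => ? ?; rewrite !mulr_ge0 //= ler_wpM2l ?mulr_ge0.
have sqr_B t : 0 <= F t ^+ 2 <= B ^+ 2.
  by case/andP: (FB t) => ? ?; rewrite sqr_ge0 /=; nra.
have cst_B (t : T) : 0 <= a ^+ 2 <= a ^+ 2 by rewrite sqr_ge0 lexx.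
have : expect (fun t => (F t - a) ^+ 2 + 2 * a * F t) =
       expect (fun t => F t ^+ 2 + a ^+ 2).
  by congr expect; apply/funext => t; ring.
rewrite (expectD dev_B lin_B) (expectD sqr_B cst_B) expect_cst ?sqr_ge0 //.
rewrite (expectZ _ FB) ?mulr_ge0 // -/a => E.
by rewrite -[LHS](addrK (2 * a * a)) E; ring.
Qed.

Lemma variance_le (F : T -> R) : (forall t, 0 <= F t <= 1) ->
  variance F <= expect F - expect F ^+ 2.
Proof.
move=> F01; rewrite (varianceE F01) lerD2r.
have F2_01 t : 0 <= F t ^+ 2 <= 1 by case/andP: (F01 t) => ? ?; rewrite sqr_ge0 /=; nra.
by apply: (ler_expect F2_01 F01) => t; case/andP: (F01 t) => ? ?; nra.
Qed.

Lemma variance_indicator (P : pred T) :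
  variance (fun t => (P t)%:R) = expect (fun t => (P t)%:R) - expect (fun t => (P t)%:R) ^+ 2.
Proof.
have P01 (t : T) : 0 <= ((P t)%:R : R) <= 1 by case: (P t); rewrite ?lexx ?ler01.
rewrite (varianceE P01); congr (expect _ - _); apply/funext => t.
by case: (P t); rewrite ?expr0n ?expr1n.
Qed.

End PmfExpectation.

Section TupleSampling.
Set Implicit Arguments.
Unset Strict Implicit.
Variables (R : realType) (T : choiceType).

(* [Eiid p] and [Variid p] are [expect (tuple_pmf p)] and [variance (tuple_pmf p)]
   up to conversion. *)
Definition tuple_pmf (w : T -> R) {m} (ts : m.-tuple T) : R := \prod_(j < m) w (tnth ts j).

Lemma esum_tuple_prod m (f : 'I_m -> T -> R) :
  (forall j t, 0 <= f j t) ->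
  (forall j, \esum_(t in [set: T]) (f j t)%:E \is a fin_num) ->
  \esum_(ts in [set: m.-tuple T]) (\prod_(j < m) f j (tnth ts j))%:E =
  (\prod_(j < m) \esum_(t in [set: T]) (f j t)%:E)%E.
Proof.
elim: m f => [|m IHm] f f0 f_fin.
  rewrite big_ord0 (_ : [set: 0.-tuple T] = [set [tuple]]) ?esum_set1 ?big_ord0 //.
  by apply/seteqP; split => // ts _; rewrite /= [ts]tuple0.
pose f' : 'I_m -> T -> R := fun j => f (lift ord0 j).
have f'0 j t : 0 <= f' j t by apply: f0.
have cons_bij : set_bij ([set: T] `*`` fun=> [set: m.-tuple T]) [set: m.+1.-tuple T]
    (fun x => [tuple of x.1 :: x.2]).
  split => // [[x ts] [y us] _ _ /(congr1 val) [-> /val_inj ->] //|ts _].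
  by exists (thead ts, behead_tuple ts) => //=; rewrite [RHS]tuple_eta.
rewrite (reindex_esum _ _ _ _ cons_bij) big_ord_recl /=.
rewrite (eq_esum (b := fun x : T * m.-tuple T =>
  ((f ord0 x.1)%:E * (\prod_(j < m) f' j (tnth x.2 j))%:E)%E)); last first.
  move=> [x ts] _; rewrite big_ord_recl /= tnth0 EFinM.
  by congr (_ * (_)%:E)%E; apply: eq_bigr => j _; rewrite tnthS.
rewrite -(esum_esum (a := fun x (ts : m.-tuple T) =>
  ((f ord0 x)%:E * (\prod_(j < m) f' j (tnth ts j))%:E)%E)); last first.
  by move=> x ts _ _; rewrite -EFinM lee_fin mulr_ge0 // prodr_ge0.
have P_fin : (\prod_(j < m) \esum_(t in [set: T]) (f' j t)%:E)%E \is a fin_num.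
  by apply: prode_fin_num => j _; apply: f_fin.
have IH := IHm f' f'0 (fun j => f_fin _).
set P := (\prod_(j < m) _)%E in P_fin IH *.
have P_ge0 : (0 <= P)%E.
  by apply: prode_ge0 => j _; apply: esum_ge0 => t _; rewrite lee_fin.
rewrite (eq_esum (b := fun x => ((fine P)%:E * (f ord0 x)%:E)%E)) => [|x _].
  rewrite esumZl ?fine_ge0 // => [|t]; last by rewrite lee_fin.
  by rewrite fineK // muleC.
rewrite esumZl // => [|ts]; last by rewrite lee_fin prodr_ge0.
by rewrite IH fineK // muleC.
Qed.

Definition sample_mean (f : T -> R) {m} (ts : m.-tuple T) : R :=
  m%:R^-1 * \sum_(j < m) f (tnth ts j).

Lemma sample_mean_bounds (f : T -> R) B m : (0 < m)%N ->
  (forall t, 0 <= f t <= B) -> forall ts : m.-tuple T, 0 <= sample_mean f ts <= B.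
Proof.
move=> m_gt0 fB ts; have m_pos : 0 < m%:R :> R by rewrite ltr0n.
rewrite /sample_mean mulr_ge0 ?invr_ge0 ?ler0n ?sumr_ge0 //=; last first.
  by move=> j _; case/andP: (fB (tnth ts j)).
rewrite ler_pdivrMl // mulr_natl.
apply: le_trans (_ : \sum_(j < m) B <= _); last by rewrite sumr_const card_ord.
by apply: ler_sum => j _; case/andP: (fB (tnth ts j)).
Qed.

Lemma sample_mean_eq1 (f : T -> R) m (ts : m.-tuple T) : (0 < m)%N ->
  (forall t, f t <= 1) -> (sample_mean f ts == 1) = [forall j, f (tnth ts j) == 1].
Proof.
move=> m_gt0 f_le1; have m_neq0 : m%:R != 0 :> R by rewrite pnatr_eq0 -lt0n.
rewrite /sample_mean -(inj_eq (mulfI m_neq0)) mulVKf // mulr1 eq_sym -subr_eq0.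
have -> : m%:R = \sum_(j < m) (1 : R) by rewrite sumr_const card_ord.
rewrite -sumrB psumr_eq0 => [|j _]; last by rewrite subr_ge0.
apply/allP/forallP => [h j|h j _]; [move: (h j (mem_index_enum j)) | move: (h j)];
  by rewrite /= subr_eq0 eq_sym.
Qed.

Variable w : T -> R.
Hypotheses (w_ge0 : forall t, 0 <= w t)
           (w_sum1 : \esum_(t in [set: T]) (w t)%:E = 1%E).

Lemma tuple_pmf_ge0 m : forall ts : m.-tuple T, 0 <= tuple_pmf w ts.
Proof. by move=> ts; apply: prodr_ge0. Qed.

Lemma tuple_pmf_sum1 m : \esum_(ts in [set: m.-tuple T]) (tuple_pmf w ts)%:E = 1%E.
Proof.
rewrite (esum_tuple_prod (f := fun=> w)) => [|//|j]; last by rewrite w_sum1.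
by rewrite big1 // w_sum1.
Qed.

Lemma expect_tuple_prod m (g : 'I_m -> T -> R) (B : 'I_m -> R) :
  (forall j t, 0 <= g j t <= B j) ->
  expect (@tuple_pmf w m) (fun ts => \prod_(j < m) g j (tnth ts j)) =
  \prod_(j < m) expect w (g j).
Proof.
move=> gB; have g0 j t : 0 <= g j t by case/andP: (gB j t).
have Eg j := esum_expect w_ge0 w_sum1 (gB j).
rewrite {1}/expect /tuple_pmf; under eq_esum do rewrite -big_split /=.
rewrite (esum_tuple_prod (f := fun j t => w t * g j t)) => [|j t|j]; last 2 first.
- by rewrite mulr_ge0.
- by rewrite Eg.
by under eq_bigr do rewrite Eg; rewrite prodEFin.
Qed.

Lemma expect_tnth m (i : 'I_m) (f : T -> R) B : (forall t, 0 <= f t <= B) ->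
  expect (@tuple_pmf w m) (fun ts => f (tnth ts i)) = expect w f.
Proof.
move=> fB; pose g j := if j == i then f else fun=> 1.
have gB j t : 0 <= g j t <= if j == i then B else 1.
  by rewrite /g; case: ifP => _; rewrite ?fB ?ler01 ?lexx.
have g1 j : j != i -> g j = fun=> 1 by rewrite /g => /negPf ->.
transitivity (expect (@tuple_pmf w m) (fun ts => \prod_(j < m) g j (tnth ts j))).
  congr expect; apply/funext => ts.
  by rewrite (bigD1 i) //= big1 => [|j /g1 ->]; rewrite /g ?eqxx ?mulr1.
rewrite (expect_tuple_prod gB) (bigD1 i) //= big1 => [|j /g1 ->]; last first.
  exact: expect_cst.
by rewrite /g eqxx mulr1.
Qed.

Lemma expect_tnth_pair m (i k : 'I_m) (f h : T -> R) B C : i != k ->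
  (forall t, 0 <= f t <= B) -> (forall t, 0 <= h t <= C) ->
  expect (@tuple_pmf w m) (fun ts => f (tnth ts i) * h (tnth ts k)) =
  expect w f * expect w h.
Proof.
move=> ik fB hC; pose g j := if j == i then f else if j == k then h else fun=> 1.
have gB j t : 0 <= g j t <= if j == i then B else if j == k then C else 1.
  by rewrite /g; case: ifP => _; [|case: ifP => _]; rewrite ?fB ?hC ?ler01 ?lexx.
have g1 j : (j != i) && (j != k) -> g j = fun=> 1.
  by rewrite /g => /andP[/negPf -> /negPf ->].
have [gi gk] : g i = f /\ g k = h by rewrite /g eqxx eq_sym (negPf ik) eqxx.
transitivity (expect (@tuple_pmf w m) (fun ts => \prod_(j < m) g j (tnth ts j))).
  congr expect; apply/funext => ts.
  by rewrite (bigD1 i) // (bigD1 k) 1?eq_sym //= big1 => [|j /g1 ->]; rewrite ?gi ?gk ?mulr1.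
rewrite (expect_tuple_prod gB) (bigD1 i) // (bigD1 k) 1?eq_sym //= big1 => [|j /g1 ->].
  by rewrite gi gk mulr1.
exact: expect_cst.
Qed.

Lemma expect_sample_mean m (f : T -> R) B : (0 < m)%N -> (forall t, 0 <= f t <= B) ->
  expect (@tuple_pmf w m) (sample_mean f) = expect w f.
Proof.
move=> m_gt0 fB; have m_neq0 : m%:R != 0 :> R by rewrite pnatr_eq0 -lt0n.
have sumB (ts : m.-tuple T) : 0 <= \sum_(j < m) f (tnth ts j) <= \sum_(j < m) B.
  by rewrite sumr_ge0 ?ler_sum // => j _; case/andP: (fB (tnth ts j)).
rewrite /sample_mean (expectZ (@tuple_pmf_ge0 m) (@tuple_pmf_sum1 m) _ sumB) ?invr_ge0 //.
rewrite (expect_sum (@tuple_pmf_ge0 m) (@tuple_pmf_sum1 m) (B := B)) => [|j ts]; last exact: fB.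
under eq_bigr do rewrite (expect_tnth _ fB).
by rewrite sumr_const card_ord -[expect w f *+ m]mulr_natl mulKf.
Qed.

Lemma expect_tnth_mul m (i j : 'I_m) (f : T -> R) B : (forall t, 0 <= f t <= B) ->
  expect (@tuple_pmf w m) (fun ts => f (tnth ts i) * f (tnth ts j)) =
  if j == i then expect w (fun t => f t ^+ 2) else expect w f ^+ 2.
Proof.
move=> fB; case: eqVneq => [->|ji]; last first.
  by rewrite (expect_tnth_pair _ fB fB) 1?eq_sym // expr2.
have f2B t : 0 <= f t ^+ 2 <= B ^+ 2 by case/andP: (fB t) => ? ?; rewrite sqr_ge0 /=; nra.
by rewrite -(expect_tnth i f2B); congr expect; apply/funext => ts; rewrite expr2.
Qed.

Lemma expect_sample_mean_sqr m (f : T -> R) B : (0 < m)%N -> (forall t, 0 <= f t <= B) ->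
  expect (@tuple_pmf w m) (fun ts => sample_mean f ts ^+ 2) =
  (expect w (fun t => f t ^+ 2) + expect w f ^+ 2 *+ m.-1) / m%:R.
Proof.
move=> m_gt0 fB; have m_neq0 : m%:R != 0 :> R by rewrite pnatr_eq0 -lt0n.
have ffB (i j : 'I_m) ts : 0 <= f (tnth ts i) * f (tnth ts j) <= B ^+ 2.
  by case/andP: (fB (tnth ts i)) => ? ?; case/andP: (fB (tnth ts j)) => ? ?; nra.
have rowB (i : 'I_m) ts :
    0 <= \sum_(j < m) f (tnth ts i) * f (tnth ts j) <= \sum_(j < m) B ^+ 2.
  by rewrite sumr_ge0 ?ler_sum // => j _; case/andP: (ffB i j ts).
have allB ts : 0 <= \sum_(i < m) \sum_(j < m) f (tnth ts i) * f (tnth ts j)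
                <= \sum_(i < m) \sum_(j < m) B ^+ 2.
  by rewrite sumr_ge0 ?ler_sum // => i _; case/andP: (rowB i ts).
have -> : (fun ts : m.-tuple T => sample_mean f ts ^+ 2) = fun ts =>
    m%:R^-1 ^+ 2 * \sum_(i < m) \sum_(j < m) f (tnth ts i) * f (tnth ts j).
  apply/funext => ts; rewrite /sample_mean exprMn; congr (_ * _).
  by rewrite expr2 mulr_suml; apply: eq_bigr => i _; rewrite mulr_sumr.
rewrite (expectZ (@tuple_pmf_ge0 m) (@tuple_pmf_sum1 m) _ allB) ?sqr_ge0 //.
rewrite (expect_sum (@tuple_pmf_ge0 m) (@tuple_pmf_sum1 m) rowB).
under eq_bigr => i _.
  rewrite (expect_sum (@tuple_pmf_ge0 m) (@tuple_pmf_sum1 m) (ffB i)).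
  under eq_bigr do rewrite (expect_tnth_mul _ _ fB).
  rewrite (bigD1 i) //= eqxx (eq_bigr (fun=> expect w f ^+ 2)) => [|j /negPf -> //].
  rewrite sumr_const cardC1 card_ord.
  over.
by rewrite sumr_const card_ord -[(_ + _) *+ m]mulr_natl; field.
Qed.

Lemma variance_sample_mean m (f : T -> R) B : (0 < m)%N -> (forall t, 0 <= f t <= B) ->
  variance (@tuple_pmf w m) (sample_mean f) = variance w f / m%:R.
Proof.
move=> m_gt0 fB; have m_neq0 : m%:R != 0 :> R by rewrite pnatr_eq0 -lt0n.
rewrite (varianceE (@tuple_pmf_ge0 m) (@tuple_pmf_sum1 m) (sample_mean_bounds m_gt0 fB)).
rewrite (varianceE w_ge0 w_sum1 fB) (expect_sample_mean m_gt0 fB).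
rewrite (expect_sample_mean_sqr m_gt0 fB) -mulr_natl -subn1 natrB //.
by field.
Qed.

End TupleSampling.

Section Agreement.
Variables (R : realType) (V : finType) (Obs : eqType) (Env : Type).
Variables (O : Env -> seq V -> seq V -> nat -> Obs) (e : Env) (c1 c2 : seq V).
Local Notation X := (agree_frac R O e c1 c2).

Lemma agree_frac_bounds t : 0 <= X t <= 1.
Proof.
rewrite /agree_frac; have [->|size_neq0] := eqVneq (size t) 0%N.
  by rewrite big_ord0 mulr0 lexx ler01.
have size_pos : 0 < (size t)%:R :> R by rewrite ltr0n lt0n.
rewrite mulr_ge0 ?invr_ge0 ?ler0n ?sumr_ge0 //= ler_pdivrMl // mulr1.
apply: le_trans (_ : \sum_(k < size t) (1 : R) <= _); last by rewrite sumr_const card_ord.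
by apply: ler_sum => k _; rewrite lern1 leq_b1.
Qed.

Lemma sharp_est_indicator m (ts : m.-tuple (seq V)) : (0 < m)%N ->
  sharp_est R O e c1 c2 ts = [forall j, X (tnth ts j) == 1]%:R.
Proof.
move=> m_gt0; rewrite /sharp_est -[smooth_est _ _ _ _ _ _]/(sample_mean X ts).
rewrite sample_mean_eq1 // => [|t]; last by case/andP: (agree_frac_bounds t).
by case: forallP.
Qed.

Lemma sharp_est_prod m (ts : m.-tuple (seq V)) : (0 < m)%N ->
  sharp_est R O e c1 c2 ts = \prod_(j < m) (X (tnth ts j) == 1)%:R.
Proof.
move=> m_gt0; rewrite sharp_est_indicator //.
case: (boolP [forall j, _]) => [/forallP all1|/forallPn[j /negPf Xj]].
  by rewrite big1 // => j _; rewrite all1.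
by rewrite (bigD1 j) //= Xj mul0r.
Qed.

Variables (p : seq V -> R) (m : nat).
Hypotheses (p_ge0 : forall t, 0 <= p t)
           (p_sum1 : \esum_(t in [set: seq V]) (p t)%:E = 1%E)
           (m_gt0 : (0 < m)%N).
Local Notation smooth := (@smooth_est R V Obs Env O e c1 c2 m).
Local Notation sharp := (@sharp_est R V Obs Env O e c1 c2 m).

Lemma Eiid_smooth : Eiid p smooth = expect p X.
Proof. exact (expect_sample_mean p_ge0 p_sum1 m_gt0 agree_frac_bounds). Qed.

Lemma Variid_smooth : Variid p smooth = variance p X / m%:R.
Proof. exact (variance_sample_mean p_ge0 p_sum1 m_gt0 agree_frac_bounds). Qed.

Lemma Eiid_sharp : Eiid p sharp = expect p (fun t => (X t == 1)%:R) ^+ m.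
Proof.
have I01 (j : 'I_m) t : 0 <= ((X t == 1)%:R : R) <= 1.
  by case: (X t == 1); rewrite ?lexx ?ler01.
have -> : sharp = fun ts => \prod_(j < m) (X (tnth ts j) == 1)%:R.
  by apply/funext => ts; rewrite sharp_est_prod.
by apply: etrans (expect_tuple_prod p_ge0 p_sum1 I01) _; rewrite prodr_const card_ord.
Qed.

Lemma Variid_sharp : Variid p sharp = Eiid p sharp - Eiid p sharp ^+ 2.
Proof.
change (variance (tuple_pmf p) sharp =
  expect (tuple_pmf p) sharp - expect (tuple_pmf p) sharp ^+ 2).
have -> : sharp = fun ts => [forall j, X (tnth ts j) == 1]%:R.
  by apply/funext => ts; rewrite sharp_est_indicator.
exact: variance_indicator (@tuple_pmf_ge0 _ _ _ p_ge0 m) (tuple_pmf_sum1 p_ge0 p_sum1 m) _.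
Qed.

End Agreement.

Lemma snr_ratio_ge (R : realFieldType) (m : nat) (mu s Q : R) :
  (0 < m)%N -> 0 < mu < 1 -> 0 < s <= mu - mu ^+ 2 -> 0 < Q <= mu ^+ m ->
  m%:R * mu^-1 ^+ m.-1 * ((1 - mu ^+ m) / (1 - mu)) <=
  (mu ^+ 2 / (s / m%:R)) / (Q ^+ 2 / (Q - Q ^+ 2)).
Proof.
move=> m_gt0 /andP[mu_gt0 mu_lt1] /andP[s_gt0 s_le] /andP[Q_gt0 Q_le].
have m_pos : 0 < m%:R :> R by rewrite ltr0n.
have muXm_gt0 : 0 < mu ^+ m by rewrite exprn_gt0.
have Q_lt1 : Q < 1 by rewrite (le_lt_trans Q_le) // exprn_ilt1 ?ltW // -lt0n.
have -> : m%:R * mu^-1 ^+ m.-1 * ((1 - mu ^+ m) / (1 - mu)) =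
    m%:R * mu / (1 - mu) * ((mu ^+ m)^-1 - 1).
  rewrite -[in mu ^+ m](prednK m_gt0) exprS exprVn.
  by field; rewrite ?gt_eqF ?subr_gt0 ?exprn_gt0.
have -> : (mu ^+ 2 / (s / m%:R)) / (Q ^+ 2 / (Q - Q ^+ 2)) =
    m%:R * mu ^+ 2 / s * (Q^-1 - 1).
  by field; rewrite ?gt_eqF //; nra.
apply: ler_pM.
- by rewrite !divr_ge0 ?mulr_ge0 ?subr_ge0 ?ltW.
- by rewrite subr_ge0 invf_ge1 // ltW // exprn_ilt1 ?ltW // -lt0n.
- rewrite ler_pdivrMr ?subr_gt0 // mulrAC ler_pdivlMr //.
  have -> : m%:R * mu ^+ 2 * (1 - mu) = m%:R * mu * (mu - mu ^+ 2) by ring.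
  by rewrite ler_pM2l ?mulr_gt0.
- by rewrite lerD2r lef_pV2 ?posrE.
Qed.

Lemma sqr_le_snr_bound (R : realFieldType) (mu : R) (m : nat) : 0 < mu < 1 -> (0 < m)%N ->
  (m ^ 2)%:R <= m%:R * mu^-1 ^+ m.-1 * ((1 - mu ^+ m) / (1 - mu)).
Proof.
move=> /andP[mu_gt0 mu_lt1] m_gt0; have mu1_neq0 : 1 - mu != 0 by rewrite subr_eq0 gt_eqF.
have -> : (1 - mu ^+ m) / (1 - mu) = \sum_(k < m) mu ^+ k.
  by apply: (mulIf mu1_neq0); rewrite mulfVK // -opprB subrX1 -mulNr opprB mulrC.
rewrite natrX expr2 -mulrA ler_wpM2l // mulr_sumr.
apply: le_trans (_ : \sum_(k < m) (1 : R) <= _); first by rewrite sumr_const card_ord.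
apply: ler_sum => k _; have km : (k <= m.-1)%N by rewrite -ltnS prednK.
rewrite -(subnKC km) exprD mulrAC exprVn mulVf ?expf_neq0 ?gt_eqF // mul1r.
by rewrite exprn_ege1 // invf_ge1 // ltW.
Qed.

Theorem theorem4p11 (R : realType) (V : finType) (Obs : eqType) (Env : Type)
  (O : Env -> seq V -> seq V -> nat -> Obs) (e : Env)
  (p : seq V -> R) (c1 c2 : seq V) (mu : R) (m : nat) :
  is_pmf p ->
  (forall t, 0 < p t -> (0 < size t)%N) ->
  sim O e c1 c2 p = mu -> 0 < mu < 1 ->
  (0 < m)%N ->
  Variid p (@smooth_est R V Obs Env O e c1 c2 m) != 0 ->
  Variid p (@sharp_est R V Obs Env O e c1 c2 m) != 0 ->
  let bound := m%:R * (mu^-1) ^+ m.-1 * ((1 - mu ^+ m) / (1 - mu)) in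
  bound <= SNR p (@smooth_est R V Obs Env O e c1 c2 m) / SNR p (@sharp_est R V Obs Env O e c1 c2 m)
  /\ (m ^ 2)%:R <= bound.
Proof.
move=> [p_ge0 p_sum1] _ Emu /andP[mu_gt0 mu_lt1] m_gt0 VS_neq0 VSh_neq0 bound.
split; last by apply: sqr_le_snr_bound; rewrite ?mu_gt0.
have X01 := agree_frac_bounds R O e c1 c2.
set X := agree_frac R O e c1 c2 in X01 Emu *.
have EX : expect p X = mu := Emu.
set q := expect p (fun t => (X t == 1)%:R).
have q_ge0 : 0 <= q by apply: (expect_ge0 p_ge0) => t; apply: ler0n.
have q_le_mu : q <= mu.
  have I01 t : 0 <= ((X t == 1)%:R : R) <= 1 by case: (X t == 1); rewrite ?lexx ?ler01.
  rewrite -EX; apply: (ler_expect p_ge0 p_sum1 I01 X01) => t.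
  by case: eqP => [->|_] //; case/andP: (X01 t).
have VX_le := variance_le p_ge0 p_sum1 X01.
have VX_ge0 : 0 <= variance p X by apply: (expect_ge0 p_ge0) => t; apply: sqr_ge0.
move: VS_neq0 VSh_neq0.
rewrite /SNR Variid_sharp // Eiid_smooth // Variid_smooth // Eiid_sharp // -/X -/q EX.
move=> VS_neq0 VSh_neq0; apply: snr_ratio_ge; rewrite ?mu_gt0 //.
- rewrite lt_def VX_ge0 -EX VX_le !andbT.
  by apply: (contraNneq _ VS_neq0) => ->; rewrite mul0r.
- apply/andP; split; last by apply: lerXn2r; rewrite ?nnegrE ?(ltW mu_gt0).
  rewrite lt_def exprn_ge0 // andbT.
  by apply: (contraNneq _ VSh_neq0) => ->; rewrite expr0n subrr.
Qed.
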